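(* If $\xi\in L_G^{*1}(\Omega)$, then $|\xi|\in L_G^{*1}(\Omega)$.
   Context: $\Omega=C_0^d(\mathbb{R}^+)$ is the space of continuous paths $\omega:[0,\infty)\to\mathbb{R}^d$ with $\omega_0=0$, $B$ the canonical process, $\hat{\mathbb{E}}$ the $G$-expectation ($G$ a monotone sublinear function on $d\times d$ symmetric matrices), $L^1_G(\Omega)$ the completion of bounded Lipschitz cylinder functions $\varphi(B_{t_1},\dots,B_{t_n})$ under $\hat{\mathbb{E}}[|\cdot|]$. $\mathcal{P}$ is a weakly compact set of probability measures representing $\hat{\mathbb{E}}$, $\hat{\mathbb{E}}[X]=\sup_{P\in\mathcal{P}}E_P[X]$ for Borel $X$, $c(A)=\sup_{P\in\mathcal{P}}P(A)$, q.s. = outside a capacity-zero set. $\mathbb{L}^1(\Omega)$ = Borel $[-\infty,\infty]$-valued $X$ with $\hat{\mathbb{E}}[|X|]<\infty$; $L_G^{1^*}(\Omega)=\{X\in\mathbb{L}^1(\Omega):\exists X_n\in L^1_G(\Omega),X_n\downarrow X\text{ q.s.}\}$; $L_G^{*1}(\Omega)=\{X-Y:X,Y\in L_G^{1^*}(\Omega)\}$. *)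

From HB Require Import structures.
From mathcomp Require Import all_boot all_order all_algebra.
From mathcomp Require Import all_classical all_reals all_analysis measurable_realfun.
Set Implicit Arguments. Unset Strict Implicit. Unset Printing Implicit Defensive.
Import Order.TTheory GRing.Theory Num.Theory.
Import numFieldNormedType.Exports.
Local Open Scope classical_set_scope.
Local Open Scope ring_scope.

Section GSetting.
Variables (R : realType) (d : nat).

(* Omega = C_0^d(R^+): continuous paths w : [0,oo) -> R^d with w 0 = 0.
   Represented as continuous functions R -> R^d that vanish on (-oo, 0]
   (canonical extension; this is a bijection with C_0^d(R^+)). *)
Record path := Path {
  pfun :> R -> 'rV[R]_d ;
  pfun_cont : continuous pfun ;
  pfun_nonpos : forall t, t <= 0 -> pfun t = 0 }.

Lemma path0_cont : continuous (fun _ : R => (0 : 'rV[R]_d)).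
Proof. by move=> x; exact: cvg_cst. Qed.

Definition path0 : path := @Path (fun _ => 0) path0_cont (fun _ _ => erefl).

HB.instance Definition _ := gen_eqMixin path.
HB.instance Definition _ := gen_choiceMixin path.
HB.instance Definition _ := isPointed.Build path path0.

Definition B (t : R) (w : path) : 'rV[R]_d := pfun w t.

(* the topology of uniform convergence on compacts, given by its
   convergent sequences (Omega is metrizable) *)
Definition loc_unif_cvg (u : nat -> path) (w : path) : Prop :=
  forall T eps : R, 0 < T -> 0 < eps ->
    exists N : nat, forall n, (N <= n)%N ->
      forall t, 0 <= t <= T -> `|pfun (u n) t - pfun w t| < eps.

Definition path_closed (A : set path) : Prop :=
  forall u w, (forall n, A (u n)) -> loc_unif_cvg u w -> A w.

Definition path_open : set (set path) := [set A | path_closed (~` A)].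

Definition Omega : Type := path.
HB.instance Definition _ := Measurable.copy Omega (g_sigma_algebraType path_open).

Definition path_continuous (f : path -> R) : Prop :=
  forall u w, loc_unif_cvg u w -> f \o u @ \oo --> f w.

Definition bounded_continuous (f : path -> R) : Prop :=
  path_continuous f /\ exists M : R, forall w, `|f w| <= M.

(* weak compactness of a set of probability measures on Omega
   (sequential, equivalent by Prokhorov / metrizability) *)
Definition weakly_compact (Ps : set (probability Omega R)) : Prop :=
  forall P : nat -> probability Omega R, (forall n, Ps (P n)) ->
  exists (phi : nat -> nat) (Q : probability Omega R),
    [/\ Ps Q, {homo phi : m n / (m < n)%N >-> (m < n)%N} &
        forall f : Omega -> R, bounded_continuous f ->
          (fun n => \int[P (phi n)]_w (f w)%:E) @ \oo
             --> \int[Q]_w (f w)%:E]%E.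

Variable Ps : set (probability Omega R).

Definition Ehat (X : Omega -> \bar R) : \bar R :=
  ereal_sup [set integral P setT X | P in Ps]%E.

Definition cap (A : set Omega) : \bar R :=
  ereal_sup [set P A | P in Ps]%E.

Definition qs (Q : Omega -> Prop) : Prop :=
  exists N : set Omega, [/\ measurable N, cap N = 0%E & forall w, ~ N w -> Q w].

Definition lip_cyl (X : Omega -> R) : Prop :=
  exists (n : nat) (t : 'I_n -> R) (phi : 'M[R]_(n, d) -> R),
    [/\ forall i, 0 <= t i,
        exists M : R, forall x, `|phi x| <= M,
        exists L : R, forall x y, `|phi x - phi y| <= L * `|x - y| &
        forall w, X w = phi (\matrix_(i < n) B (t i) w)].

(* L^1_G: completion of the bounded Lipschitz cylinder functions under
   Ehat[|.|], realized as Borel functions approximable by them *)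
Definition L1G (X : Omega -> R) : Prop :=
  measurable_fun setT X /\
  exists phi : nat -> Omega -> R, (forall n, lip_cyl (phi n)) /\
    (fun n => Ehat (fun w => `|X w - phi n w|%:E)) @ \oo --> 0%E.

Definition bbL1 (X : Omega -> \bar R) : Prop :=
  measurable_fun setT X /\ (Ehat (fun w => `|X w|%E) < +oo)%E.

Definition L1Gstar (X : Omega -> \bar R) : Prop :=
  bbL1 X /\ exists Xn : nat -> Omega -> R, (forall n, L1G (Xn n)) /\
    qs (fun w => (forall n, Xn n.+1 w <= Xn n w) /\
                 (fun n => (Xn n w)%:E) @ \oo --> X w).

Definition LGstar1 (xi : Omega -> \bar R) : Prop :=
  exists X Y, [/\ L1Gstar X, L1Gstar Y & xi = (fun w => X w - Y w)%E].

End GSetting.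

From HB Require Import structures.
From mathcomp Require Import all_boot all_order all_algebra.
From mathcomp Require Import all_classical all_reals all_analysis measurable_realfun.
From mathcomp Require Import lra.
Set Implicit Arguments. Unset Strict Implicit. Unset Printing Implicit Defensive.
Import Order.TTheory GRing.Theory Num.Theory.
Import numFieldNormedType.Exports.
Local Open Scope classical_set_scope.
Local Open Scope ring_scope.

(* Where both are finite,
   |X - Y| = max(X, Y) - min(X, Y), and max, min are monotone 1-Lipschitz
   maps vanishing at (0, 0): applied to the approximating sequences
   X_n, Y_n in L_G^1 they give decreasing sequences in L_G^1 converging
   q.s. to max(X, Y) and min(X, Y).  Since Ehat|X| and Ehat|Y| are finite,
   X and Y are finite outside a capacity-zero set, and setting max := +oo,
   min := 0 there keeps both in L_G^{1*} while still |xi| = max - min. *)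

Definition lipschitz2 (R : numDomainType) (g : R -> R -> R) :=
  forall a b c e, `|g a b - g c e| <= `|a - c| + `|b - e|.

Lemma ler_mx_norm_coef (R : realDomainType) m n (x : 'M[R]_(m, n)) i j :
  `|x i j| <= `|x|.
Proof.
by rewrite [leRHS]/Num.norm /= mx_normrE; apply/bigmax_geP; right; exists (i, j).
Qed.

Lemma mx_norm_le (R : realDomainType) m n (x : 'M[R]_(m, n)) c :
  0 <= c -> (forall i j, `|x i j| <= c) -> `|x| <= c.
Proof.
by move=> c0 xc; rewrite [leLHS]/Num.norm /= mx_normrE; apply/bigmax_leP.
Qed.

Section Lipschitz2.
Variables (R : realType) (g : R -> R -> R).
Hypothesis g_lip : lipschitz2 g.

Lemma lipschitz2_norm_le : g 0 0 = 0 -> forall a b, `|g a b| <= `|a| + `|b|.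
Proof. by move=> g00 a b; have := g_lip a b 0 0; rewrite g00 !subr0. Qed.

Lemma lipschitz2_cvg (a b : nat -> R) x y : a @ \oo --> x -> b @ \oo --> y ->
  (fun n => g (a n) (b n)) @ \oo --> g x y.
Proof.
move=> /cvgrPdist_lt ax /cvgrPdist_lt bx; apply/cvgrPdist_lt => e e0.
have e2 : 0 < e / 2 by rewrite divr_gt0.
near=> n; apply: le_lt_trans (g_lip _ _ _ _) _.
have : `|x - a n| < e / 2 by near: n; exact: ax.
have : `|y - b n| < e / 2 by near: n; exact: bx.
lra.
Unshelve. all: by end_near.
Qed.

End Lipschitz2.

Lemma lipschitz2_max (R : realDomainType) : lipschitz2 (Num.max : R -> R -> R).
Proof.
move=> a b c e; have := ler_norm (a - c); have := ler_norm (c - a).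
have := ler_norm (b - e); have := ler_norm (e - b).
rewrite (distrC c a) (distrC e b) ler_norml.
by case: (ltP a b); case: (ltP c e) => *; apply/andP; split; lra.
Qed.

Lemma lipschitz2_min (R : realDomainType) : lipschitz2 (Num.min : R -> R -> R).
Proof.
move=> a b c e; have := ler_norm (a - c); have := ler_norm (c - a).
have := ler_norm (b - e); have := ler_norm (e - b).
rewrite (distrC c a) (distrC e b) ler_norml.
by case: (ltP a b); case: (ltP c e) => *; apply/andP; split; lra.
Qed.

Lemma le_max2 (R : realDomainType) (a b c e : R) :
  a <= c -> b <= e -> Num.max a b <= Num.max c e.
Proof. by case: (ltP a b); case: (ltP c e) => *; lra. Qed.

Lemma le_min2 (R : realDomainType) (a b c e : R) :
  a <= c -> b <= e -> Num.min a b <= Num.min c e.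
Proof. by case: (ltP a b); case: (ltP c e) => *; lra. Qed.

Lemma distr_maxr_minr (R : realDomainType) (x y : R) :
  `|x - y| = Num.max x y - Num.min x y.
Proof. by case: (ltP x y) => xy; [rewrite ltr0_norm ?opprB|rewrite ger0_norm]; lra. Qed.

Lemma abse_add_not_fin (R : numDomainType) (x y : \bar R) :
  ~~ ((x \is a fin_num) && (y \is a fin_num)) -> (`|x| + `|y| = +oo)%E.
Proof. by case: x => [x||]; case: y => [y||]. Qed.

Lemma abse_sub_not_fin (R : numDomainType) (x y : \bar R) :
  ~~ ((x \is a fin_num) && (y \is a fin_num)) -> (`|x - y| = +oo)%E.
Proof. by case: x => [x||]; case: y => [y||]. Qed.

Section GExpectation.
Variables (R : realType) (d : nat) (Ps : set (probability (Omega R d) R)).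
Hypothesis Ps_ne : Ps !=set0.

Lemma path_continuous_measurable (f : Omega R d -> R) :
  path_continuous f -> measurable_fun setT f.
Proof.
move=> fc; apply: (measurability _ (RGenOpens.measurableE R)).
move=> _ [_ [a [b ->] <-]]; rewrite setTI; apply: sub_sigma_algebra.
move=> u w uab uw wab.
have ab_open : open `]a, b[%classic by exact: interval_open.
have [N _ uN] := fc u w uw _ (ab_open _ wab).
exact: (uab N (uN N (leqnn N))).
Qed.

Lemma lip_cyl_continuous (f : Omega R d -> R) : lip_cyl f -> path_continuous f.
Proof.
move=> [n [t [phi [t0 _ [L phiL] fE]]]] u w uw.
apply/cvgrPdist_lt => e e0.
pose T := 1 + \sum_i t i.
have sum_t0 : 0 <= \sum_i t i by apply: sumr_ge0 => i _; exact: t0.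
have T0 : 0 < T by rewrite /T; lra.
have tT i : 0 <= t i <= T.
  rewrite t0 /= /T (bigD1 i) //=.
  have : 0 <= \sum_(j | j != i) t j by apply: sumr_ge0 => j _; exact: t0.
  lra.
pose eps := e / (`|L| + 1).
have eps0 : 0 < eps by rewrite divr_gt0 //; lra.
have Leps : (`|L| + 1) * eps = e by rewrite /eps mulrC divfK //; lra.
have [N uN] := uw T eps T0 eps0.
near=> k; have Nk : (N <= k)%N by near: k; exists N.
rewrite /= !fE; apply: le_lt_trans (phiL _ _) _.
set D := _ - _.
have Deps : `|D| <= eps.
  apply: mx_norm_le => [|i j]; first exact: ltW.
  rewrite !mxE; have := ler_mx_norm_coef (B (t i) w - B (t i) (u k)) 0 j.
  rewrite !mxE => /le_trans; apply; rewrite distrC; exact/ltW/uN.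
have : L * `|D| <= `|L| * eps.
  apply: le_trans (ler_wpM2l (normr_ge0 L) Deps).
  by apply: ler_wpM2r => //; exact: ler_norm.
nra.
Unshelve. all: by end_near.
Qed.

Lemma lip_cyl_measurable (f : Omega R d -> R) : lip_cyl f -> measurable_fun setT f.
Proof. by move=> /lip_cyl_continuous; exact: path_continuous_measurable. Qed.

Local Open Scope ereal_scope.

Lemma Ehat_ge_integral (P : probability (Omega R d) R) f : Ps P ->
  \int[P]_w f w <= Ehat Ps f.
Proof. by move=> PsP; apply: ereal_sup_ubound; exists P. Qed.

Lemma Ehat_ge0 f : (forall w, 0 <= f w) -> 0 <= Ehat Ps f.
Proof.
move=> f0; have [P PsP] := Ps_ne.
apply: le_trans (Ehat_ge_integral f PsP); exact: integral_ge0.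
Qed.

Lemma le_Ehat f g : (forall w, 0 <= f w) -> measurable_fun setT f ->
  measurable_fun setT g -> (forall w, f w <= g w) -> Ehat Ps f <= Ehat Ps g.
Proof.
move=> f0 mf mg fg; apply: ge_ereal_sup => _ [P PsP <-].
by apply: le_trans (Ehat_ge_integral g PsP); apply: ge0_le_integral.
Qed.

Lemma Ehat_add_le f g : (forall w, 0 <= f w) -> (forall w, 0 <= g w) ->
  measurable_fun setT f -> measurable_fun setT g ->
  Ehat Ps (fun w => f w + g w) <= Ehat Ps f + Ehat Ps g.
Proof.
move=> f0 g0 mf mg; apply: ge_ereal_sup => _ [P PsP <-].
by rewrite ge0_integralD //; apply: leeD; exact: Ehat_ge_integral.
Qed.

Lemma cap_ge (P : probability (Omega R d) R) A : Ps P -> P A <= cap Ps A.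
Proof. by move=> PsP; apply: ereal_sup_ubound; exists P. Qed.

Lemma cap_eq0 A : cap Ps A = 0 <-> forall P, Ps P -> P A = 0.
Proof.
split=> [cA0 P PsP|PA0].
  by apply/eqP; rewrite eq_le measure_ge0 andbT -cA0; exact: cap_ge.
apply/eqP; rewrite eq_le; apply/andP; split.
  by apply: ge_ereal_sup => _ [P PsP <-]; rewrite PA0.
by have [P PsP] := Ps_ne; rewrite -(PA0 P PsP); exact: cap_ge.
Qed.

Lemma bbL1_fin_num_ae (X : Omega R d -> \bar R) (P : probability (Omega R d) R) :
  Ps P -> bbL1 Ps X ->
  exists N, [/\ measurable N, P N = 0 & [set w | X w \isn't a fin_num] `<=` N].
Proof.
move=> PsP [mX iX].
have iXP : P.-integrable setT X.
  apply/integrableP; split => //; apply: le_lt_trans iX; exact: Ehat_ge_integral.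
have [N [mN PN0 XN]] := integrable_ae measurableT iXP.
by exists N; split => // w /= Xw; apply: XN => /= Xfin; rewrite Xfin in Xw.
Qed.

End GExpectation.

Lemma measure_null_setU d (T : measurableType d) (R : realType)
    (P : probability T R) (A B : set T) :
  measurable A -> measurable B -> P A = 0%E -> P B = 0%E -> P (A `|` B) = 0%E.
Proof.
move=> mA mB PA0 PB0; apply/eqP; rewrite eq_le measure_ge0 andbT.
have PA_le0 : (P A <= 0)%E by rewrite PA0.
have PB_le0 : (P B <= 0)%E by rewrite PB0.
by apply: le_trans (measureU2 P mA mB) _; rewrite -(adde0 0%E); exact: leeD.
Qed.

Lemma measure_null_subset d (T : measurableType d) (R : realType)
    (P : probability T R) (A B : set T) :
  measurable A -> measurable B -> A `<=` B -> P B = 0%E -> P A = 0%E.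
Proof.
move=> mA mB AB PB0; apply/eqP; rewrite eq_le measure_ge0 andbT -PB0.
by apply: le_measure => //; rewrite inE.
Qed.

Section MonotoneLipschitzOperation.
Variables (R : realType) (d : nat) (Ps : set (probability (Omega R d) R)).
Hypothesis Ps_ne : Ps !=set0.
Variable g : R -> R -> R.
Hypotheses (g_lip : lipschitz2 g) (g00 : g 0 0 = 0).
Hypothesis g_mono : forall a b c e, a <= c -> b <= e -> g a b <= g c e.
Hypothesis g_measurable : forall f1 f2 : Omega R d -> R,
  measurable_fun setT f1 -> measurable_fun setT f2 ->
  measurable_fun setT (fun w => g (f1 w) (f2 w)).

Lemma lip_cyl_lipschitz2 (f1 f2 : Omega R d -> R) :
  lip_cyl f1 -> lip_cyl f2 -> lip_cyl (fun w => g (f1 w) (f2 w)).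
Proof.
move=> [n1 [t1 [p1 [t10 [M1 p1M] [L1 p1L] f1E]]]].
move=> [n2 [t2 [p2 [t20 [M2 p2M] [L2 p2L] f2E]]]].
exists (n1 + n2)%N, (fun i => match fintype.split i with inl a => t1 a | inr b => t2 b end),
  (fun x => g (p1 (usubmx x)) (p2 (dsubmx x))).
have usub_le (x y : 'M[R]_(n1 + n2, d)) : `|usubmx x - usubmx y| <= `|x - y|.
  by apply: mx_norm_le => // i j; have := ler_mx_norm_coef (x - y) (lshift n2 i) j;
    rewrite !mxE.
have dsub_le (x y : 'M[R]_(n1 + n2, d)) : `|dsubmx x - dsubmx y| <= `|x - y|.
  by apply: mx_norm_le => // i j; have := ler_mx_norm_coef (x - y) (rshift n1 i) j;
    rewrite !mxE.
have lip_comp m (L : R) (q : 'M[R]_(n1 + n2, d) -> 'M[R]_(m, d)) p :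
    (forall x y, `|p x - p y| <= L * `|x - y|) ->
    (forall x y, `|q x - q y| <= `|x - y|) ->
    forall x y, `|p (q x) - p (q y)| <= `|L| * `|x - y|.
  move=> pL qle x y; apply: le_trans (pL _ _) _.
  apply: le_trans (ler_wpM2l (normr_ge0 L) (qle x y)).
  by apply: ler_wpM2r => //; exact: ler_norm.
split.
- by move=> i; case: fintype.split.
- exists (M1 + M2) => x; apply: le_trans (lipschitz2_norm_le g_lip g00 _ _) _.
  exact: lerD.
- exists (`|L1| + `|L2|) => x y; apply: le_trans (g_lip _ _ _ _) _.
  by rewrite mulrDl; apply: lerD; [exact: lip_comp p1L usub_le _ _ | exact: lip_comp p2L dsub_le _ _].
- move=> w; rewrite f1E f2E; congr (g (p1 _) (p2 _)); apply/matrixP => i j.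
  + by rewrite !mxE (unsplitK (inl _ i)).
  + by rewrite !mxE (unsplitK (inr _ i)).
Qed.

Lemma L1G_lipschitz2 (X Y : Omega R d -> R) :
  L1G Ps X -> L1G Ps Y -> L1G Ps (fun w => g (X w) (Y w)).
Proof.
move=> [mX [p [p_cyl Xp]]] [mY [q [q_cyl Yq]]].
split; first exact: g_measurable.
exists (fun n w => g (p n w) (q n w)).
split=> [n|]; first exact: lip_cyl_lipschitz2.
have mdist (f1 f2 : Omega R d -> R) : measurable_fun setT f1 ->
    measurable_fun setT f2 -> measurable_fun setT (fun w => (`|f1 w - f2 w|)%:E).
  move=> m1 m2; apply/measurable_EFinP; apply: measurableT_comp.
    exact: normr_measurable.
  exact: measurable_funB.
have mp n := lip_cyl_measurable (p_cyl n).
have mq n := lip_cyl_measurable (q_cyl n).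
have XpYq : (fun n => Ehat Ps (fun w => (`|X w - p n w|)%:E) +
    Ehat Ps (fun w => (`|Y w - q n w|)%:E))%E @ \oo --> 0%E.
  by rewrite -(adde0 0%E); apply: cvgeD.
apply: (squeeze_cvge (f := cst 0%E)) XpYq; last exact: cvg_cst.
apply: nearW => n; apply/andP; split; first exact: Ehat_ge0.
apply: le_trans (Ehat_add_le _ _ _ (mdist _ _ mX (mp n)) (mdist _ _ mY (mq n))) => //.
apply: le_Ehat => //.
- by apply: mdist; exact: g_measurable.
- by apply: emeasurable_funD; apply: mdist.
- by move=> w; rewrite -EFinD lee_fin.
Qed.

Local Open Scope ereal_scope.

Definition lift_fin_num (e0 : \bar R) (X Y : Omega R d -> \bar R) w : \bar R :=
  if (X w \is a fin_num) && (Y w \is a fin_num)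
  then (g (fine (X w)) (fine (Y w)))%:E else e0.

Lemma bbL1_lift_fin_num e0 X Y : bbL1 Ps X -> bbL1 Ps Y ->
  bbL1 Ps (lift_fin_num e0 X Y).
Proof.
move=> [mX iX] [mY iY].
have mZ : measurable_fun setT (lift_fin_num e0 X Y).
  apply: measurable_fun_ifT.
  - by apply: measurable_and; apply: (measurable_fun_bool true);
      exact: emeasurable_fin_num.
  - by apply/measurable_EFinP; apply: g_measurable; exact: measurableT_comp.
  - exact: measurable_cst.
have mabs (Z : Omega R d -> \bar R) : measurable_fun setT Z ->
    measurable_fun setT (fun w => `|Z w|).
  by move=> mZ'; apply: measurableT_comp mZ'; exact: abse_measurable.
split=> //; apply: le_lt_trans (lte_add_pinfty iX iY).
apply: le_trans (Ehat_add_le _ _ _ (mabs _ mX) (mabs _ mY)) => //.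
apply: le_Ehat; [by []|exact: mabs|exact: emeasurable_funD (mabs _ mX) (mabs _ mY)|move=> w].
rewrite /lift_fin_num.
case: ifPn => [/andP[]|not_fin]; last by rewrite abse_add_not_fin // leey.
case: (X w) => [x||] // _; case: (Y w) => [y||] // _ /=.
by rewrite -EFinD lee_fin lipschitz2_norm_le.
Qed.

Lemma L1Gstar_lift_fin_num e0 X Y : L1Gstar Ps X -> L1Gstar Ps Y ->
  L1Gstar Ps (lift_fin_num e0 X Y).
Proof.
move=> [bX [Xn [Xn_L1G [N1 [mN1 cN1 XnX]]]]] [bY [Yn [Yn_L1G [N2 [mN2 cN2 YnY]]]]].
split; first exact: bbL1_lift_fin_num.
exists (fun n w => g (Xn n w) (Yn n w)).
split=> [n|]; first exact: L1G_lipschitz2.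
pose fin_XY w := (X w \is a fin_num) && (Y w \is a fin_num).
have m_fin_XY : measurable_fun setT fin_XY.
  have [[mX _] [mY _]] := (bX, bY).
  by apply: measurable_and; apply: (measurable_fun_bool true);
    exact: emeasurable_fin_num.
pose N3 := [set w | ~~ fin_XY w].
have mN3 : measurable N3.
  by have := measurable_neg m_fin_XY measurableT (Y := [set true]) I; rewrite setTI.
exists (N1 `|` N2 `|` N3); split.
- by apply: measurableU => //; exact: measurableU.
- apply/cap_eq0 => // P PsP.
  have [NX [mNX PNX XNX]] := bbL1_fin_num_ae PsP bX.
  have [NY [mNY PNY YNY]] := bbL1_fin_num_ae PsP bY.
  have PN3 : P N3 = 0.
    apply: (measure_null_subset (B := NX `|` NY)) => //.
    + exact: measurableU.
    + by move=> w; rewrite /N3 /= negb_and => /orP[/XNX|/YNY]; [left|right].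
    + exact: measure_null_setU.
  apply: measure_null_setU => //; first exact: measurableU.
  by apply: measure_null_setU => //; apply: (proj1 (cap_eq0 Ps_ne _)).
- move=> w /not_orP[/not_orP[N1w N2w] N3w].
  have finXY : fin_XY w by apply/negPn/negP; exact: N3w.
  have [Xn_dec Xn_cvg] := XnX w N1w; have [Yn_dec Yn_cvg] := YnY w N2w.
  rewrite /lift_fin_num -/(fin_XY w) finXY; case/andP: finXY => finX finY.
  split=> [n|]; first exact: g_mono.
  move: Xn_cvg Yn_cvg; rewrite -(fineK finX) -(fineK finY).
  move=> /fine_cvgP[_ Xn_cvg] /fine_cvgP[_ Yn_cvg].
  apply: cvg_EFin; first exact: nearW.
  exact: lipschitz2_cvg.
Qed.

End MonotoneLipschitzOperation.

Theorem proposition3p17 (R : realType) (d : nat)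
  (Ps : set (probability (Omega R d) R))
  (Ps_ne : Ps !=set0) (Ps_wc : weakly_compact Ps)
  (xi : Omega R d -> \bar R) :
  LGstar1 Ps xi -> LGstar1 Ps (fun w => `|xi w|%E).
Proof.
move=> [X [Y [LX LY ->]]].
exists (lift_fin_num Num.max +oo%E X Y), (lift_fin_num Num.min 0%E X Y); split.
- apply: L1Gstar_lift_fin_num => //; first exact: lipschitz2_max.
  + exact: maxxx.
  + exact: le_max2.
  + by move=> f1 f2; exact: measurable_maxr.
- apply: L1Gstar_lift_fin_num => //; first exact: lipschitz2_min.
  + exact: minxx.
  + exact: le_min2.
  + by move=> f1 f2; exact: measurable_minr.
- apply: funext => w; rewrite /lift_fin_num.
  case: ifPn => [|not_fin]; last by rewrite abse_sub_not_fin // sube0.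
  case: (X w) => [x||] //; case: (Y w) => [y||] // _ /=.
  by rewrite -EFinB distr_maxr_minr.
Qed.
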